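(* $\Omega(\log\log n)$ bits of advice are required for a deterministic online algorithm to achieve an asymptotic approximation ratio greater than $1/2$ for online one-sided bipartite matching, even when the algorithm is given $n$ in advance. More precisely, no online algorithm using $\log\log n-\log\log\log n$ bits of advice (and knowing $n$) achieves an asymptotic approximation ratio greater than $1/2$.
   Context: Online one-sided bipartite matching: offline vertices are known in advance; $n$ online vertices arrive one at a time in adversarial order, each with its set of offline neighbours, and must be irrevocably matched to an unmatched neighbour or left unmatched; the goal is a maximum-size matching. An online algorithm with $b$ bits of advice may read a binary advice string of length $b$ written before the input is processed by an oracle that knows the whole input and has unbounded computational power. The asymptotic approximation ratio of $\mathbb{A}$ is $\liminf_{n}\inf_{I\in\mathcal{I}_n} v(\mathbb{A},I)/v(I)$, with $v(I)$ the maximum matching size. *)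

From Stdlib Require Import Reals.
From mathcomp Require Import all_boot.
Set Implicit Arguments. Unset Strict Implicit. Unset Printing Implicit Defensive.

(* ---------- Instances ----------
   An instance is given by m (the number of offline vertices, named 0..m-1,
   known in advance) and adj : seq (seq nat), the neighbour sets of the
   n = size adj online vertices in arrival order.  Each neighbour set is
   represented canonically as a strictly increasing list of offline vertices. *)
Definition wf_instance (m : nat) (adj : seq (seq nat)) : bool :=
  all (fun s => sorted ltn s && all (fun u => u < m) s) adj.

Definition is_matching (m : nat) (adj : seq (seq nat))
  (f : {ffun 'I_(size adj) -> option 'I_m}) : bool :=
  [forall i, if f i is Some u then val u \in nth [::] adj i else true] &&
  [forall i, forall j, ((f i != None) && (f i == f j)) ==> (i == j)].

Definition matching_size m (adj : seq (seq nat))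
  (f : {ffun 'I_(size adj) -> option 'I_m}) : nat :=
  #|[pred i | f i != None]|.

Definition opt (m : nat) (adj : seq (seq nat)) : nat :=
  \max_(f : {ffun 'I_(size adj) -> option 'I_m} | is_matching f)
     matching_size f.

(* ---------- Deterministic online algorithms with advice ----------
   On arrival of an online vertex, the algorithm decides using: n (given in
   advance), m (offline vertices known in advance), the advice string, the
   neighbour sets of the previously arrived online vertices (its own past
   decisions are a deterministic function of these), and the neighbour set
   of the current vertex.  An answer that is not an unmatched neighbour is
   treated as "leave unmatched"; this loses no generality, since every valid
   algorithm is represented and every representable one is valid. *)
Definition online_alg : Type :=
  nat -> nat -> seq bool -> seq (seq nat) -> seq nat -> option nat.

Fixpoint run_aux (A : online_alg) (n m : nat) (adv : seq bool)
  (past : seq (seq nat)) (matched : seq nat) (rest : seq (seq nat)) : nat :=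
  match rest with
  | [::] => 0
  | cur :: rest' =>
      match A n m adv past cur with
      | Some u =>
          if (u \in cur) && (u \notin matched)
          then (run_aux A n m adv (rcons past cur) (u :: matched) rest').+1
          else run_aux A n m adv (rcons past cur) matched rest'
      | None => run_aux A n m adv (rcons past cur) matched rest'
      end
  end.

Definition run (A : online_alg) (m : nat) (adv : seq bool)
  (adj : seq (seq nat)) : nat :=
  run_aux A (size adj) m adv [::] [::] adj.

Definition lg (x : R) : R := Rdiv (ln x) (ln (INR 2)).

(* the advice budget: floor(log log n - log log log n) bits (0 if negative) *)
Definition adv_bits (n : nat) : nat :=
  Z.to_nat (Int_part (Rminus (lg (lg (INR n))) (lg (lg (lg (INR n)))))).

(* v(A,I): the oracle (knowing the whole input) writes the best advice string
   of length adv_bits n. *)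
Definition alg_value (A : online_alg) (m : nat) (adj : seq (seq nat)) : nat :=
  \max_(w : (adv_bits (size adj)).-tuple bool) run A m (tval w) adj.

(* The asymptotic approximation ratio
     liminf_n inf_{I in I_n} v(A,I)/v(I)
   is strictly greater than c, written out:
   there are c' > c and N such that for all n >= N and all instances I with
   n online vertices (and v(I) > 0), v(A,I) >= c' * v(I). *)
Definition asym_ratio_gt (A : online_alg) (c : R) : Prop :=
  exists c' : R, Rlt c c' /\
  exists N : nat, forall n : nat, N <= n ->
    forall (m : nat) (adj : seq (seq nat)),
      wf_instance m adj -> size adj = n -> 0 < opt m adj ->
      Rle (Rmult c' (INR (opt m adj))) (INR (alg_value A m adj)).

From Stdlib Require Import Reals Lra ZArith.
From mathcomp Require Import all_boot zify.
Set Implicit Arguments. Unset Strict Implicit. Unset Printing Implicit Defensive.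

(* Let q be the number of advice strings, so that the algorithm is one of q
   deterministic algorithms. The adversary reserves one offline vertex for
   every online vertex, adjacent to it; the reserved vertices are distinct,
   so OPT = n. The next online vertex is made adjacent to q+1 unreserved
   vertices that all q algorithms see in the same state (matched or not);
   by pigeonhole over the 2^q possible states such a set exists while more
   than q 2^q vertices are unreserved. Some vertex of the set is chosen by
   none of the q algorithms, and it becomes reserved. Whenever an algorithm
   matches a vertex of the set, the newly reserved vertex was unmatched for
   it too, so each of its matches removes two vertices that are neither
   reserved nor matched: 2 ALG <= m. Taking m = n + q 2^q gives
   ALG <= (n + q 2^q) / 2, and q 2^q = o(n) along n = 2^2^2^i. *)

Section OnlineRun.
Variables (A : online_alg) (n m : nat) (adv : seq bool).

Definition run_step (st : seq (seq nat) * seq nat * nat) (cur : seq nat) :=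
  let: (past, matched, gain) := st in
  match A n m adv past cur with
  | Some u => if (u \in cur) && (u \notin matched)
              then (rcons past cur, u :: matched, gain.+1)
              else (rcons past cur, matched, gain)
  | None => (rcons past cur, matched, gain)
  end.

Definition run_state (p : seq (seq nat)) := foldl run_step ([::], [::], 0) p.
Definition run_matched (p : seq (seq nat)) := (run_state p).1.2.
Definition run_gain (p : seq (seq nat)) := (run_state p).2.

Lemma run_auxE past matched gain rest :
  gain + run_aux A n m adv past matched rest =
  (foldl run_step (past, matched, gain) rest).2.
Proof.
elim: rest past matched gain => [|cur rest IH] past matched gain /=.
  by rewrite addn0.
case: (A n m adv past cur) => [u|]; last exact: IH.
by case: ifP => _; rewrite -IH ?addnS.
Qed.

Lemma foldl_run_step_past past matched gain rest :
  (foldl run_step (past, matched, gain) rest).1.1 = past ++ rest.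
Proof.
elim: rest past matched gain => [|cur rest IH] past matched gain /=.
  by rewrite cats0.
case: (A n m adv past cur) => [u|]; last by rewrite IH cat_rcons.
by case: ifP => _; rewrite IH cat_rcons.
Qed.

Lemma run_state_rcons p S : run_state (rcons p S) =
  match A n m adv p S with
  | Some u => if (u \in S) && (u \notin run_matched p)
              then (rcons p S, u :: run_matched p, (run_gain p).+1)
              else (rcons p S, run_matched p, run_gain p)
  | None => (rcons p S, run_matched p, run_gain p)
  end.
Proof.
rewrite /run_state foldl_rcons -/(run_state p) /run_matched /run_gain.
have := foldl_run_step_past [::] [::] 0 p; rewrite cat0s -/(run_state p).
by case: (run_state p) => [[past mt] g] /= ->.
Qed.

End OnlineRun.

Lemma run_gainE A m adv adj : run A m adv adj = run_gain A (size adj) m adv adj.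
Proof. by rewrite /run /run_gain /run_state -run_auxE. Qed.

Lemma count_uniq_mem_pred (T : eqType) (P : pred T) (s : seq T) x :
  uniq s -> x \in s -> P x -> count P s = (count (predI P (predC1 x)) s).+1.
Proof.
move=> us xs Px.
by rewrite (permP (perm_to_rem xs)) /= Px rem_filter // count_filter add1n.
Qed.

Lemma size_le_fibres (T : finType) (X : eqType) (f : X -> T) (s : seq X) q :
  (forall x, x \in s -> count (fun y => f y == f x) s <= q) ->
  size s <= q * #|T|.
Proof.
move=> fibre_le.
have -> : size s = \sum_(t : T) count (fun y => f y == t) s.
  elim: s {fibre_le} => [|x s IH] /=; first by rewrite big1.
  rewrite big_split /= -IH (bigD1 (f x)) //= eqxx big1 => [|t /negbTE].
    by rewrite addn0 add1n.
  by rewrite eq_sym => ->.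
rewrite mulnC -sum_nat_const; apply: leq_sum => t _.
have [/hasP [x xs /eqP <-]|] := boolP (has (fun y => f y == t) s).
  exact: fibre_le.
by rewrite has_count lt0n negbK => /eqP ->.
Qed.

Definition advice (n : nat) := (adv_bits n).-tuple bool.

Definition adversary_slack n := #|{: advice n}| * 2 ^ #|{: advice n}|.

Section Adversary.
Variables (A : online_alg) (n m : nat).

Local Notation q := #|{: advice n}|.

Definition unreserved (rsv : seq nat) := filter (predC (mem rsv)) (iota 0 m).

Definition free_count (rsv matched : seq nat) :=
  count (fun x => (x \notin rsv) && (x \notin matched)) (iota 0 m).

Definition profile (p : seq (seq nat)) (x : nat) : {ffun advice n -> bool} :=
  [ffun t : advice n => x \notin run_matched A n m (tval t) p].

Definition profile_class p rsv x :=
  [seq y <- unreserved rsv | profile p y == profile p x].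

Definition large_class_rep p rsv :=
  let R := unreserved rsv in
  nth 0 R (find (fun x => q < size (profile_class p rsv x)) R).

Definition next_set p rsv := take q.+1 (profile_class p rsv (large_class_rep p rsv)).

Definition picked p (S : seq nat) (y : nat) :=
  [exists t : advice n, A n m (tval t) p S == Some y].

Definition next_reserved p S := nth 0 S (find (fun y => ~~ picked p S y) S).

Fixpoint adversary (t : nat) : seq (seq nat) * seq nat :=
  if t is t'.+1 then
    let: (p, rsv) := adversary t' in
    let S := next_set p rsv in (rcons p S, rcons rsv (next_reserved p S))
  else ([::], [::]).

Definition potential p rsv (tau : advice n) :=
  2 * run_gain A n m (tval tau) p + free_count rsv (run_matched A n m (tval tau) p).

Lemma size_unreserved rsv : m - size rsv <= size (unreserved rsv).
Proof.
have := count_predC (mem rsv) (iota 0 m); rewrite size_iota => <-.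
have : count (mem rsv) (iota 0 m) <= size rsv.
  rewrite -size_filter uniq_leq_size ?filter_uniq ?iota_uniq // => x.
  by rewrite mem_filter => /andP [].
rewrite size_filter; lia.
Qed.

Lemma next_set_spec p rsv : adversary_slack n < size (unreserved rsv) ->
  let S := next_set p rsv in
  [/\ sorted ltn S, size S = q.+1,
      {subset S <= unreserved rsv} &
      {in S &, forall y z, profile p y = profile p z}].
Proof.
move=> large S; set R := unreserved rsv.
have has_large : has (fun x => q < size (profile_class p rsv x)) R.
  apply/hasPn => small.
  have : size R <= q * #|{ffun advice n -> bool}|.
    apply: (size_le_fibres (f := profile p)) => x xR.
    by move: (small x xR); rewrite -leqNgt size_filter.
  by rewrite card_ffun card_bool leqNgt => /negP; apply; exact: large.
set x0 := large_class_rep p rsv.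
have class_large : q < size (profile_class p rsv x0) := nth_find 0 has_large.
have -> : S = take q.+1 (profile_class p rsv x0) by [].
have memS y : y \in take q.+1 (profile_class p rsv x0) ->
    (profile p y == profile p x0) && (y \in R).
  by move/mem_take; rewrite mem_filter.
split.
- apply/take_sorted/sorted_filter; first exact: ltn_trans.
  by apply: sorted_filter; [exact: ltn_trans | exact: iota_ltn_sorted].
- exact: size_takel.
- by move=> y /memS /andP [].
- by move=> y z /memS /andP [/eqP -> _] /memS /andP [/eqP -> _].
Qed.

Lemma next_reserved_spec p S : uniq S -> size S = q.+1 ->
  next_reserved p S \in S /\ ~~ picked p S (next_reserved p S).
Proof.
move=> uS sizeS.
have has_unpicked : has (fun y => ~~ picked p S y) S.
  apply/hasPn => all_picked.
  have : size S <= size (pmap (fun t : advice n => A n m (tval t) p S) (enum {: advice n})).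
    apply: uniq_leq_size => // y yS.
    have /existsP [t /eqP At] := negbNE (all_picked y yS).
    by rewrite mem_pmap; apply/mapP; exists t; rewrite ?mem_enum.
  rewrite size_pmap sizeS => /leq_trans /(_ (count_size _ _)).
  by rewrite -cardE ltnn.
split; last exact: (nth_find 0 has_unpicked).
by rewrite /next_reserved mem_nth // -has_find.
Qed.

Lemma free_count_rcons_le rsv o matched :
  free_count (rcons rsv o) matched <= free_count rsv matched.
Proof.
by apply: sub_count => x /=; rewrite mem_rcons in_cons negb_or => /andP [/andP [_ ->] ->].
Qed.

Lemma free_count_match rsv matched u o : u != o -> u < m -> o < m ->
  u \notin rsv -> o \notin rsv -> u \notin matched -> o \notin matched ->
  free_count rsv matched = (free_count (rcons rsv o) (u :: matched)).+2.
Proof.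
move=> uo um om ursv orsv umt omt.
rewrite /free_count (count_uniq_mem_pred (x := u) (iota_uniq 0 m)); last first.
- by rewrite ursv umt.
- by rewrite mem_iota.
rewrite (count_uniq_mem_pred (x := o) (iota_uniq 0 m)); last first.
- by rewrite !inE orsv omt eq_sym uo.
- by rewrite mem_iota.
congr _.+2; apply: eq_count => x; rewrite !inE mem_rcons !in_cons !negb_or.
by case: (x \in rsv); case: (x \in matched); case: (x == o); case: (x == u).
Qed.

Lemma mem_unreserved rsv x : (x \in unreserved rsv) = (x < m) && (x \notin rsv).
Proof. by rewrite mem_filter mem_iota andbC. Qed.

Lemma potential_next p rsv S o tau :
  {subset S <= unreserved rsv} -> {in S &, forall y z, profile p y = profile p z} ->
  o \in S -> ~~ picked p S o ->
  potential p rsv tau <= m -> potential (rcons p S) (rcons rsv o) tau <= m.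
Proof.
move=> subS profS oS unpicked; rewrite /potential /run_gain /run_matched run_state_rcons.
rewrite -/(run_gain _ _ _ _ p) -/(run_matched _ _ _ _ p).
set matched := run_matched _ _ _ _ p; set gain := run_gain _ _ _ _ p.
have no_match :
    2 * gain + free_count (rcons rsv o) matched <= 2 * gain + free_count rsv matched.
  by rewrite leq_add2l free_count_rcons_le.
case At: (A n m (tval tau) p S) => [u|] /=; last exact: leq_trans.
case: ifP => [/andP [uS umt]|_] /=; last exact: leq_trans.
have uo : u != o.
  by apply: contraNneq unpicked => <-; apply/existsP; exists tau; rewrite At.
(* [o] has the same profile as [u], so it is still unmatched under [tau] *)
have omt : o \notin matched.
  have := congr1 (fun f : {ffun advice n -> bool} => f tau) (profS o u oS uS).
  by rewrite !ffunE => ->.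
have /andP [um ursv] : (u < m) && (u \notin rsv) by rewrite -mem_unreserved subS.
have /andP [om orsv] : (o < m) && (o \notin rsv) by rewrite -mem_unreserved subS.
rewrite (free_count_match uo um om ursv orsv umt omt).
set k := free_count _ _; lia.
Qed.

Record adversary_inv (t : nat) (p : seq (seq nat)) (rsv : seq nat) : Prop :=
  AdversaryInv {
    size_prefix : size p = t;
    size_reserved : size rsv = t;
    uniq_reserved : uniq rsv;
    reserved_lt : all (fun x => x < m) rsv;
    reserved_adjacent : forall i, i < t -> nth 0 rsv i \in nth [::] p i;
    wf_prefix : wf_instance m p;
    potential_le : forall tau, potential p rsv tau <= m }.

Lemma adversary_inv0 : adversary_inv 0 [::] [::].
Proof.
split=> // tau; rewrite /potential /free_count /run_gain /run_matched /=.
by rewrite (eq_count (a2 := predT)) // count_predT size_iota.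
Qed.

Lemma adversary_inv_step t p rsv : adversary_inv t p rsv ->
  adversary_slack n < size (unreserved rsv) ->
  let S := next_set p rsv in
  adversary_inv t.+1 (rcons p S) (rcons rsv (next_reserved p S)).
Proof.
move=> [sp srsv ursv rsv_lt rsv_adj wf pot] large S.
have [sortS sizeS subS profS] := next_set_spec p large.
have [oS unpicked] := next_reserved_spec p (sorted_uniq ltn_trans ltnn sortS) sizeS.
set o := next_reserved p S in oS unpicked *.
have /andP [om orsv] : (o < m) && (o \notin rsv) by rewrite -mem_unreserved subS.
split.
- by rewrite size_rcons sp.
- by rewrite size_rcons srsv.
- by rewrite rcons_uniq orsv ursv.
- by rewrite all_rcons om rsv_lt.
- move=> i; rewrite ltnS leq_eqVlt => /orP [/eqP ->|ilt].
    by rewrite !nth_rcons srsv sp ltnn eqxx.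
  by rewrite !nth_rcons srsv sp ilt rsv_adj.
- move: wf; rewrite /wf_instance all_rcons sortS => -> /=; rewrite andbT.
  by apply/allP => y /subS; rewrite mem_unreserved => /andP [].
- by move=> tau; apply: potential_next.
Qed.

Lemma adversary_invariant t : t + adversary_slack n <= m ->
  adversary_inv t (adversary t).1 (adversary t).2.
Proof.
elim: t => [|t IH] room; first exact: adversary_inv0.
have inv_t := IH (leq_trans (leq_addl 1 _) room).
rewrite /=; case: (adversary t) inv_t => p rsv /= inv_t.
apply: (adversary_inv_step inv_t).
apply: leq_trans (size_unreserved rsv); rewrite (size_reserved inv_t); lia.
Qed.

End Adversary.

Lemma opt_ge_size m adj (rsv : seq nat) :
  size rsv = size adj -> uniq rsv -> all (fun x => x < m) rsv ->
  (forall i, i < size adj -> nth 0 rsv i \in nth [::] adj i) ->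
  size adj <= opt m adj.
Proof.
move=> srsv ursv rsv_lt rsv_adj.
have lt_m (i : 'I_(size adj)) : nth 0 rsv i < m.
  by apply: (allP rsv_lt); rewrite mem_nth // srsv.
pose f := [ffun i : 'I_(size adj) => Some (Ordinal (lt_m i))].
have f_matching : is_matching f.
  apply/andP; split; apply/forallP => i; rewrite ?ffunE; first exact: rsv_adj.
  apply/forallP => j; apply/implyP; rewrite !ffunE => /andP [_ /eqP [/eqP]].
  by rewrite nth_uniq ?srsv.
apply: leq_trans (leq_bigmax_cond _ f_matching).
rewrite /matching_size -[X in X <= _]card_ord subset_leq_card //.
by apply/subsetP => i _; rewrite inE ffunE.
Qed.

Lemma adversary_instance A n : exists m adj,
  [/\ wf_instance m adj, size adj = n, n <= opt m adj &
      2 * alg_value A m adj <= n + adversary_slack n].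
Proof.
set m := n + adversary_slack n.
have [sp srsv ursv rsv_lt rsv_adj wf pot] := adversary_invariant A (leqnn m).
set adj := (adversary A n m n).1 in sp rsv_adj wf pot *.
exists m, adj; split => //.
  rewrite -{1}sp; apply: (opt_ge_size (rsv := (adversary A n m n).2)) => //.
    by rewrite srsv sp.
  by rewrite sp.
suff : alg_value A m adj <= m %/ 2 by lia.
rewrite /alg_value sp; apply/bigmax_leqP => tau _.
by have := pot tau; rewrite /potential run_gainE sp; lia.
Qed.

Lemma INR_expn2 k : INR (2 ^ k) = pow (INR 2) k.
Proof. by elim: k => [|k IH] //; rewrite expnS mult_INR IH. Qed.

Lemma lg_expn2 k : lg (INR (2 ^ k)) = INR k.
Proof.
have ln2_gt0 : Rlt 0 (ln (INR 2)) by rewrite -ln_1; apply: ln_increasing; simpl; lra.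
rewrite /lg INR_expn2 ln_pow; last by simpl; lra.
by field; lra.
Qed.

Lemma Int_part_INR k : Int_part (INR k) = Z.of_nat k.
Proof. by rewrite INR_IZR_INZ; symmetry; apply: Int_part_spec; lra. Qed.

Lemma adv_bits_tower i : adv_bits (2 ^ 2 ^ 2 ^ i) = 2 ^ i - i.
Proof.
rewrite /adv_bits !lg_expn2 -minus_INR ?Int_part_INR ?Nat2Z.id //.
exact/leP/ltnW/ltn_expl.
Qed.

Lemma ltn_tower i : i < 2 ^ 2 ^ 2 ^ i.
Proof. by do 2 apply: (ltn_trans _ (ltn_expl _ (ltnSn 1))); apply: ltn_expl. Qed.

Lemma slack_tower i D : 0 < i -> D <= i ->
  adversary_slack (2 ^ 2 ^ 2 ^ i) * D <= 2 ^ 2 ^ 2 ^ i.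
Proof.
move=> i_gt0 Di.
rewrite /adversary_slack card_tuple card_bool adv_bits_tower.
set j := 2 ^ i.
have ij : i < j := ltn_expl _ (ltnSn 1).
have Dj : D <= j by apply: leq_trans Di (ltnW ij).
have j_le : j <= 2 ^ j.-1.
  by have := ltn_expl j.-1 (ltnSn 1); rewrite prednK // (leq_trans _ ij).
have qj : 2 ^ (j - i) <= 2 ^ j.-1 by rewrite leq_exp2l //; lia.
apply: (@leq_trans (2 ^ (j - i) * 2 ^ 2 ^ (j - i) * 2 ^ i)); first exact: leq_mul.
rewrite -!expnD leq_exp2l //.
have -> : 2 ^ j = 2 ^ j.-1 + 2 ^ j.-1.
  by rewrite addnn -mul2n -expnS prednK // (leq_trans _ ij).
lia.
Qed.

Local Open Scope R_scope.

Lemma lt_ratio_of_slack (c : R) (a o n k D : nat) :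
  (0 < n)%N -> (0 < D)%N -> / INR D < 2 * c - 1 ->
  (2 * a <= n + k)%N -> (n <= o)%N -> (k * D <= n)%N -> INR a < c * INR o.
Proof.
move=> /ltP/lt_0_INR n_gt0 /ltP/lt_0_INR D_gt0 D_large.
move=> /leP/le_INR; rewrite mult_INR plus_INR /= => a_le.
move=> /leP/le_INR o_ge /leP/le_INR; rewrite mult_INR => kD_le.
have k_le : INR k <= INR n * / INR D.
  rewrite -[INR k]Rmult_1_r -(Rinv_r (INR D)) -?Rmult_assoc; last lra.
  by apply: Rmult_le_compat_r => //; apply/Rlt_le/Rinv_0_lt_compat.
have : INR n * / INR D < INR n * (2 * c - 1) by apply: Rmult_lt_compat_l.
have : c * INR n <= c * INR o.
  by apply: Rmult_le_compat_l => //; have := Rinv_0_lt_compat _ D_gt0; lra.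
lra.
Qed.

Lemma exists_inv_lt_gap (c : R) : INR 1 / INR 2 < c ->
  exists2 D : nat, (0 < D)%N & / INR D < 2 * c - 1.
Proof.
move=> half_lt_c; have [|D [D_large /ltP D_gt0]] := archimed_cor1 (2 * c - 1).
  by move: half_lt_c; simpl INR; lra.
by exists D.
Qed.

Local Close Scope R_scope.

Theorem corollary2 (A : online_alg) : ~ asym_ratio_gt A (Rdiv (INR 1) (INR 2)).
Proof.
move=> [c [half_lt_c [N ratio_ge]]].
have [D D_gt0 D_large] := exists_inv_lt_gap half_lt_c.
pose i := N + D; pose n := 2 ^ 2 ^ 2 ^ i.
have [m [adj [wf size_adj opt_ge alg_le]]] := adversary_instance A n.
have n_gt0 : 0 < n by rewrite expn_gt0.
have slack_le : adversary_slack n * D <= n by apply: slack_tower; lia.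
have := ratio_ge n (leq_trans (leq_addr D N) (ltnW (ltn_tower i))) m adj wf size_adj.
move=> /(_ (leq_trans n_gt0 opt_ge)); apply/Rlt_not_le.
exact: lt_ratio_of_slack n_gt0 D_gt0 D_large alg_le opt_ge slack_le.
Qed.
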